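(* Let $k,p,q$ be integers with $q>0$, $\gcd(p,q)=1$ and $kq-p$ even, and let $Q=Q_2(L)$ be the involutory quandle with generators $a,b,c$ and defining relations $$R1: c^{ab}=c,\qquad R2: a^{(ca)^q}=a^{(ba)^{(kq-p)/2}},\qquad R3: b^{(bc)^q}=b^{(ab)^{(kq-p)/2}}.$$ Then the following relations also hold in $Q$: $c^{(ac)^{2q}}=c$; $a^{(ca)^{2q}}=a$; $b^{(cb)^{2q}}=b$; $a^{(ba)^{(kq-p)/2}}=a^{(ac)^q}$; $b^{(ab)^{(kq-p)/2}}=b^{(bc)^q}$; for $0\le i\le q$ and $0\le j\le \vert kq-p\vert/2$: $a^{(ca)^i(ba)^jc}=a^{(ca)^ic(ba)^j}$, $b^{(cb)^i(ab)^jc}=b^{(cb)^ic(ab)^j}$, $a^{(ca)^i(ab)^jabc}=a^{(ca)^{i+1}(ba)^jb}$, $b^{(cb)^i(ba)^jbac}=b^{(cb)^{i+1}(ab)^ja}$; $c^{(ac)^ia}=c^{(ac)^ib}$ for all $i\ge 0$.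
   Context: An involutory quandle is a set with a binary operation $(x,y)\mapsto x^y$ satisfying $x^x=x$, $(x^y)^y=x$ and $(x^y)^z=(x^z)^{(y^z)}$; a presentation denotes the involutory quandle generated by the given generators subject to the given relations and these axioms. Exponents are read left to right: $x^{yz}=(x^y)^z$, and $z^w$ for a word $w$ means successive action by its letters; negative powers are interpreted via $(xy)^{-1}=yx$. This presentation is the involutory quandle of $L=L(k,p/q)\cup C$, the two-bridge link built from a block of $k$ half-twists and a rational $p/q$-tangle together with an unknotted axis $C$, in the case $kq-p$ even. *)

From Stdlib Require Import ZArith List.
Import ListNotations.

Definition is_invol_quandle {T : Type} (op : T -> T -> T) : Prop :=
  (forall x, op x x = x) /\
  (forall x y, op (op x y) y = x) /\
  (forall x y z, op (op x y) z = op (op x z) (op y z)).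

(* x^w for a word w = [w1; ...; wn]: successive action, read left to right. *)
Definition act {T : Type} (op : T -> T -> T) (x : T) (w : list T) : T :=
  fold_left op w x.

Definition pw {T : Type} (u v : T) (n : nat) : list T :=
  concat (repeat [u; v] n).

(* The word (uv)^n for n an integer, using (uv)^{-1} = vu. *)
Definition zpw {T : Type} (u v : T) (n : Z) : list T :=
  if (0 <=? n)%Z then pw u v (Z.to_nat n) else pw v u (Z.to_nat (- n)).

(* R1 says that
   c is fixed by ab, so c commutes with ab and ba, and conjugation by xc
   (x in {a, b}) exchanges (ab)^N and (ba)^N.  Coprimality and the parity
   hypothesis make q odd, so conjugation by (xc)^q exchanges them as well;
   feeding this into R2 (resp. R3) shows that a (resp. b) sees (ab)^N and
   (ba)^N alike and that (ca)^2q fixes a (resp. (cb)^2q fixes b).  Applying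
   right multiplication by the two sides of R2 to c gives (ac)^2q fixes c. *)

From Stdlib Require Import ZArith List Lia.
Import ListNotations.

Lemma act_app {T} (op : T -> T -> T) x w1 w2 :
  act op x (w1 ++ w2) = act op (act op x w1) w2.
Proof. apply fold_left_app. Qed.

Lemma act_cons {T} (op : T -> T -> T) x y w : act op x (y :: w) = act op (op x y) w.
Proof. reflexivity. Qed.

Lemma pw_S {T} (u v : T) n : pw u v (S n) = [u; v] ++ pw u v n.
Proof. reflexivity. Qed.

Lemma pw_add {T} (u v : T) m n : pw u v (m + n) = pw u v m ++ pw u v n.
Proof. unfold pw. now rewrite repeat_app, concat_app. Qed.

Lemma pw_Sr {T} (u v : T) n : pw u v (S n) = pw u v n ++ [u; v].
Proof. now rewrite <- Nat.add_1_r, pw_add. Qed.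

Lemma pw_double {T} (u v : T) n : pw u v (2 * n) = concat (repeat (pw u v 2) n).
Proof.
  induction n as [|n IH]; [reflexivity|].
  replace (2 * S n) with (2 + 2 * n) by lia.
  now rewrite pw_add, IH.
Qed.

Lemma pw_snoc {T} (u v : T) n : pw u v n ++ [u] = u :: pw v u n.
Proof.
  induction n as [|n IH]; [reflexivity|].
  now rewrite pw_S, <- app_assoc, IH.
Qed.

Lemma rev_pw {T} (u v : T) n : rev (pw u v n) = pw v u n.
Proof.
  induction n as [|n IH]; [reflexivity|].
  rewrite pw_S, rev_app_distr, IH, pw_Sr. reflexivity.
Qed.

Section InvolutoryQuandle.
Context {T : Type} (op : T -> T -> T).
Hypothesis op_idem : forall x, op x x = x.
Hypothesis op_invol : forall x y, op (op x y) y = x.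
Hypothesis op_distr : forall x y z, op (op x y) z = op (op x z) (op y z).

Definition same_action (w1 w2 : list T) : Prop := forall z, act op z w1 = act op z w2.

Definition commute (w1 w2 : list T) : Prop := same_action (w1 ++ w2) (w2 ++ w1).

Lemma same_action_prefix u w1 w2 : same_action w1 w2 -> same_action (u ++ w1) (u ++ w2).
Proof. intros H z. rewrite !act_app. apply H. Qed.

Lemma act_self_cons x w : act op x (x :: w) = act op x w.
Proof. now rewrite act_cons, op_idem. Qed.

Lemma act_rev_cancel z w : act op (act op z w) (rev w) = z.
Proof.
  revert z; induction w as [|y w IH]; intros z; [reflexivity|].
  simpl rev. rewrite act_app, (act_cons op z y w), IH. apply op_invol.
Qed.

Lemma act_pw_cancel z u v n : act op (act op z (pw u v n)) (pw v u n) = z.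
Proof. rewrite <- (rev_pw u v n). apply act_rev_cancel. Qed.

Lemma act_fixed_rev d w : act op d w = d -> act op d (rev w) = d.
Proof. intros H. rewrite <- H at 1. apply act_rev_cancel. Qed.

Lemma act_fixed_pw d u v n : act op d [u; v] = d -> act op d (pw u v n) = d.
Proof.
  intros H; induction n as [|n IH]; [reflexivity|].
  now rewrite pw_S, act_app, H.
Qed.

Lemma act_fixed_pair d u v : act op d [u; v] = d -> act op d [u] = act op d [v].
Proof. intros H. rewrite <- H at 2. symmetry. apply op_invol. Qed.

Lemma op_act y w u : op u (act op y w) = act op u (rev w ++ y :: w).
Proof.
  revert y u; induction w as [|z w IH]; intros y u; [reflexivity|].
  rewrite act_cons, IH. simpl rev. rewrite <- app_assoc. simpl app.
  rewrite !act_app, !act_cons, op_distr, op_invol. reflexivity.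
Qed.

Lemma commute_of_fixed c w : act op c w = c -> commute w [c].
Proof.
  intros H z. transitivity (op (act op z w) (act op c w)).
  - now rewrite H, act_app.
  - now rewrite op_act, act_app, act_rev_cancel.
Qed.

Lemma commute_repeat w W n : commute w W -> commute (concat (repeat w n)) W.
Proof.
  intros H; induction n as [|n IH]; intros z; simpl.
  - now rewrite app_nil_r.
  - rewrite <- app_assoc, act_app, (IH (act op z w)), <- act_app, app_assoc.
    now rewrite act_app, (H z), <- act_app, <- app_assoc.
Qed.

Lemma commute_pw u v c n : commute [u; v] [c] -> commute (pw u v n) [c].
Proof. apply commute_repeat. Qed.

Lemma cons_pw x y n : same_action (x :: pw x y n) (pw y x n ++ [x]).
Proof.
  induction n as [|n IH]; intros z; [reflexivity|].
  rewrite !pw_S. simpl app. rewrite !act_cons, <- (IH (op (op z y) x)), act_cons.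
  now rewrite !op_invol.
Qed.

Lemma pw_snoc_mem x u v n :
  x = u \/ x = v -> same_action (pw u v n ++ [x]) (x :: pw v u n).
Proof.
  intros [-> | ->] z.
  - now rewrite pw_snoc.
  - symmetry. apply cons_pw.
Qed.

Lemma act_self_conj x w1 w1' w2 w2' :
  same_action (w1 ++ [x]) (x :: w1') -> same_action (w2 ++ [x]) (x :: w2') ->
  act op x w1 = act op x w2 -> act op x w1' = act op x w2'.
Proof.
  intros H1 H2 H.
  rewrite <- (act_self_cons x w1'), <- (act_self_cons x w2'), <- (H1 x), <- (H2 x).
  now rewrite !act_app, H.
Qed.

Lemma xc_swaps_pw x c u v N :
  x = u \/ x = v -> commute [v; u] [c] ->
  same_action ([x; c] ++ pw v u N) (pw u v N ++ [x; c]).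
Proof.
  intros hx hc z.
  change ([x; c] ++ pw v u N) with ([x] ++ [c] ++ pw v u N).
  rewrite act_app, <- (commute_pw v u c N hc (act op z [x])), <- act_app, app_assoc, act_app.
  change ([x] ++ pw v u N) with (x :: pw v u N).
  now rewrite <- (pw_snoc_mem x u v N hx z), <- act_app, <- app_assoc.
Qed.

Lemma commute_pw_shift u v c j :
  commute [u; v] [c] -> same_action (pw u v j ++ [u; v; c]) ([c; u] ++ pw v u j ++ [v]).
Proof.
  intros hc.
  replace (pw u v j ++ [u; v; c]) with (pw u v (S j) ++ [c])
    by now rewrite pw_Sr, <- app_assoc.
  replace ([c; u] ++ pw v u j ++ [v]) with ([c] ++ pw u v (S j)).
  - apply (commute_pw u v c (S j) hc).
  - rewrite pw_Sr. simpl. change [u; v] with ([u] ++ [v]).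
    now rewrite (app_assoc (pw u v j)), pw_snoc.
Qed.

Lemma uc_swaps_pair u v c :
  commute [u; v] [c] -> same_action ([u; c] ++ [u; v]) ([v; u] ++ [u; c]).
Proof.
  intros hc z.
  change ([u; c] ++ [u; v]) with ([u] ++ [c] ++ [u; v]).
  rewrite act_app, <- (hc (act op z [u])).
  unfold act; simpl. now rewrite !op_invol.
Qed.

Lemma fixed_pair_pw_uc u v c d n :
  commute [u; v] [c] -> act op d [u; v] = d ->
  act op (act op d (pw u c n)) [u; v] = act op d (pw u c n).
Proof.
  intros hc; revert d; induction n as [|n IH]; intros d Hd; [exact Hd|].
  rewrite pw_S, act_app. apply IH.
  rewrite <- act_app, (uc_swaps_pair u v c hc d), act_app.
  now rewrite (act_fixed_rev d [u; v] Hd : act op d [v; u] = d).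
Qed.

Lemma act_xc_double_fixed c x u v N Q :
  act op c [v; u] = c -> act op (op c x) [u; v] = op c x ->
  act op x (pw c x Q) = act op x (pw u v N) -> act op c (pw x c (2 * Q)) = c.
Proof.
  intros Hc Hcx H.
  apply (f_equal (op c)) in H. rewrite !op_act, !rev_pw in H.
  rewrite (act_app _ c (pw v u N)), (act_fixed_pw c v u N Hc), act_cons,
    (act_fixed_pw _ u v N Hcx) in H.
  rewrite <- pw_snoc, app_assoc, <- pw_add in H.
  replace (2 * Q) with (Q + Q) by lia.
  rewrite <- (act_rev_cancel (act op c (pw x c (Q + Q))) [x]).
  rewrite <- (act_app op c (pw x c (Q + Q)) [x]), H.
  apply (act_rev_cancel c [x]).
Qed.

Section OddPower.
Variables (x c u v : T) (N Q : nat).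
Hypothesis hx : x = u \/ x = v.
Hypothesis hcuv : commute [u; v] [c].
Hypothesis hcvu : commute [v; u] [c].
Hypothesis hQ : Nat.Odd Q.

Lemma commute_xc2_pw : commute (pw x c 2) (pw u v N).
Proof.
  assert (hx' : x = v \/ x = u) by tauto.
  intros z. change (pw x c 2) with ([x; c] ++ [x; c]).
  rewrite <- app_assoc, (act_app _ z [x; c]).
  rewrite (xc_swaps_pw x c v u N hx' hcuv), <- act_app, app_assoc.
  now rewrite act_app, (xc_swaps_pw x c u v N hx hcvu), <- act_app, <- app_assoc.
Qed.

Lemma xc_odd_pw_swaps_pw : same_action (pw x c Q ++ pw v u N) (pw u v N ++ pw x c Q).
Proof.
  destruct hQ as [r ->]. intros z.
  rewrite pw_add, pw_double. change (pw x c 1) with [x; c].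
  pose proof (commute_repeat _ _ r commute_xc2_pw) as HR.
  set (R := concat (repeat (pw x c 2) r)) in *.
  rewrite <- app_assoc, (act_app _ z R), (xc_swaps_pw x c u v N hx hcvu).
  rewrite <- act_app, app_assoc, (act_app _ z (R ++ _)).
  rewrite (HR z).
  now rewrite <- act_app, <- app_assoc.
Qed.

Lemma act_cx_relations :
  act op x (pw c x Q) = act op x (pw u v N) ->
  act op x (pw u v N) = act op x (pw x c Q) /\ act op x (pw c x (2 * Q)) = x.
Proof.
  intros hR.
  assert (HA : act op x (pw x c Q) = act op x (pw v u N)).
  { apply (act_self_conj x (pw c x Q) _ (pw u v N)); [| apply pw_snoc_mem, hx | exact hR].
    apply pw_snoc_mem. now right. }
  assert (HD : act op (act op x (pw v u N)) (pw v u N) = x).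
  { rewrite <- HA at 1. rewrite <- act_app, xc_odd_pw_swaps_pw, act_app, <- hR.
    apply act_pw_cancel. }
  assert (HB : act op x (pw u v N) = act op x (pw v u N)).
  { rewrite <- HD at 1. apply act_pw_cancel. }
  split.
  - now rewrite HB, HA.
  - replace (2 * Q) with (Q + Q) by lia.
    rewrite pw_add, act_app, hR, HB, <- HA. apply act_pw_cancel.
Qed.

End OddPower.

Section TwoBridge.
Variables a b c : T.
Hypothesis R1 : act op c [a; b] = c.

Lemma c_fixed_ba : act op c [b; a] = c.
Proof. exact (act_fixed_rev c [a; b] R1). Qed.

Lemma ca_fixed_ab : act op (op c a) [a; b] = op c a.
Proof.
  change (op (op (op c a) a) b = op c a). rewrite op_invol.
  symmetry. exact (act_fixed_pair c a b R1).
Qed.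

Lemma ca_fixed_ba : act op (op c a) [b; a] = op c a.
Proof. exact (act_fixed_rev _ [a; b] ca_fixed_ab). Qed.

Lemma commute_ab_c : commute [a; b] [c].
Proof. exact (commute_of_fixed c _ R1). Qed.

Lemma commute_ba_c : commute [b; a] [c].
Proof. exact (commute_of_fixed c _ c_fixed_ba). Qed.

Lemma relations_pw Q u v N :
  Nat.Odd Q -> (u = a /\ v = b) \/ (u = b /\ v = a) ->
  act op a (pw c a Q) = act op a (pw v u N) ->
  act op b (pw b c Q) = act op b (pw u v N) ->
  act op c (pw a c (2 * Q)) = c /\ act op a (pw c a (2 * Q)) = a /\
  act op b (pw c b (2 * Q)) = b /\ act op a (pw v u N) = act op a (pw a c Q).
Proof.
  intros hQ huv R2 R3.
  assert (Huv : (a = v \/ a = u) /\ (b = v \/ b = u) /\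
                commute [u; v] [c] /\ commute [v; u] [c] /\
                act op c [u; v] = c /\ act op (op c a) [v; u] = op c a)
    by (destruct huv as [[-> ->] | [-> ->]]; repeat split; auto using
          commute_ab_c, commute_ba_c, c_fixed_ba, ca_fixed_ab, ca_fixed_ba).
  destruct Huv as (ha & hb & hcuv & hcvu & hc & hca).
  assert (R3' : act op b (pw c b Q) = act op b (pw v u N)).
  { apply (act_self_conj b (pw b c Q) _ (pw u v N)); [| | exact R3];
      apply pw_snoc_mem; tauto. }
  destruct (act_cx_relations a c v u N Q ha hcvu hcuv hQ R2) as [Ha Ha2].
  destruct (act_cx_relations b c v u N Q hb hcvu hcuv hQ R3') as [_ Hb2].
  repeat split; auto.
  exact (act_xc_double_fixed c a v u N Q hc hca R2).
Qed.

Lemma relations_zpw Q M :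
  Nat.Odd Q ->
  act op a (pw c a Q) = act op a (zpw b a M) ->
  act op b (pw b c Q) = act op b (zpw a b M) ->
  act op c (pw a c (2 * Q)) = c /\ act op a (pw c a (2 * Q)) = a /\
  act op b (pw c b (2 * Q)) = b /\ act op a (zpw b a M) = act op a (pw a c Q).
Proof.
  intros hQ R2 R3. unfold zpw in *.
  destruct (0 <=? M)%Z; apply relations_pw; auto.
Qed.

Lemma relations_ij i j :
  act op a (pw c a i ++ pw b a j ++ [c]) = act op a (pw c a i ++ [c] ++ pw b a j) /\
  act op b (pw c b i ++ pw a b j ++ [c]) = act op b (pw c b i ++ [c] ++ pw a b j) /\
  act op a (pw c a i ++ pw a b j ++ [a; b; c])
    = act op a (pw c a (i + 1) ++ pw b a j ++ [b]) /\
  act op b (pw c b i ++ pw b a j ++ [b; a; c])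
    = act op b (pw c b (i + 1) ++ pw a b j ++ [a]).
Proof.
  rewrite Nat.add_1_r, !pw_Sr, <- !app_assoc.
  split; [|split; [|split]]; apply same_action_prefix.
  - exact (commute_pw b a c j commute_ba_c).
  - exact (commute_pw a b c j commute_ab_c).
  - exact (commute_pw_shift a b c j commute_ab_c).
  - exact (commute_pw_shift b a c j commute_ba_c).
Qed.

Lemma c_orbit_ab i : act op c (pw a c i ++ [a]) = act op c (pw a c i ++ [b]).
Proof.
  rewrite !act_app. apply act_fixed_pair, fixed_pair_pw_uc; [exact commute_ab_c | exact R1].
Qed.

End TwoBridge.

End InvolutoryQuandle.

Lemma odd_of_coprime_even (k p q : Z) :
  Z.gcd p q = 1%Z -> Z.Even (k * q - p) -> Z.Odd q.
Proof.
  intros hgcd [t ht].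
  destruct (Z.Even_or_Odd q) as [[m hm] | hodd]; [exfalso | exact hodd].
  assert (H2 : (2 | Z.gcd p q)%Z).
  { apply Z.gcd_greatest; [exists (k * m - t)%Z | exists m]; lia. }
  rewrite hgcd in H2. destruct H2 as [s hs]. lia.
Qed.

Lemma odd_to_nat (q : Z) : (0 < q)%Z -> Z.Odd q -> Nat.Odd (Z.to_nat q).
Proof. intros hq [m hm]. exists (Z.to_nat m). lia. Qed.

Theorem lemma4p4 (k p q : Z) (hq : (0 < q)%Z) (hgcd : Z.gcd p q = 1%Z)
  (heven : Z.Even (k * q - p)%Z)
  (T : Type) (op : T -> T -> T) (hQ : is_invol_quandle op) (a b c : T)
  (R1 : act op c [a; b] = c)
  (R2 : act op a (pw c a (Z.to_nat q)) = act op a (zpw b a ((k * q - p) / 2)%Z))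
  (R3 : act op b (pw b c (Z.to_nat q)) = act op b (zpw a b ((k * q - p) / 2)%Z)) :
  act op c (pw a c (2 * Z.to_nat q)) = c /\
  act op a (pw c a (2 * Z.to_nat q)) = a /\
  act op b (pw c b (2 * Z.to_nat q)) = b /\
  act op a (zpw b a ((k * q - p) / 2)%Z) = act op a (pw a c (Z.to_nat q)) /\
  act op b (zpw a b ((k * q - p) / 2)%Z) = act op b (pw b c (Z.to_nat q)) /\
  (forall i j : nat, (i <= Z.to_nat q)%nat ->
     (j <= Z.to_nat (Z.abs (k * q - p) / 2))%nat ->
     act op a (pw c a i ++ pw b a j ++ [c]) = act op a (pw c a i ++ [c] ++ pw b a j) /\
     act op b (pw c b i ++ pw a b j ++ [c]) = act op b (pw c b i ++ [c] ++ pw a b j) /\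
     act op a (pw c a i ++ pw a b j ++ [a; b; c])
       = act op a (pw c a (i + 1) ++ pw b a j ++ [b]) /\
     act op b (pw c b i ++ pw b a j ++ [b; a; c])
       = act op b (pw c b (i + 1) ++ pw a b j ++ [a])) /\
  (forall i : nat, act op c (pw a c i ++ [a]) = act op c (pw a c i ++ [b])).
Proof.
  destruct hQ as (op_idem & op_invol & op_distr).
  pose proof (odd_to_nat q hq (odd_of_coprime_even k p q hgcd heven)) as Hq.
  destruct (relations_zpw op op_idem op_invol op_distr a b c R1 _ _ Hq R2 R3)
    as (Hc & Ha & Hb & Ha').
  refine (conj Hc (conj Ha (conj Hb (conj Ha' (conj (eq_sym R3) (conj _ _)))))).
  - intros i j _ _. exact (relations_ij op op_invol op_distr a b c R1 i j).
  - exact (c_orbit_ab op op_invol op_distr a b c R1).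
Qed.
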